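(* Let $\Lambda$ be a row-finite $k$-graph with no sources, let $l\ge1$, and let $\alpha$ be an action of $\mathbb{Z}^l$ on $\Lambda$ by automorphisms. Let $c:\Lambda\times_\alpha\mathbb{Z}^l\to\mathbb{Z}^l$ be the cocycle $c(\lambda,m)=-m$. Then the formula $\rho((\lambda,m),n):=(\alpha_{n-m}(\lambda),(n-m,n))$ (for $\lambda\in\Lambda$, $m\in\mathbb{N}^l$, $n\in\mathbb{Z}^l$) determines an isomorphism of $(k+l)$-graphs from the skew product $(\Lambda\times_\alpha\mathbb{Z}^l)\times_c\mathbb{Z}^l$ onto the cartesian product $\Lambda\times\Delta_l$.
   Context: A $k$-graph is a countable category $\Lambda$ with a functor $d:\Lambda\to\mathbb{N}^k$ with unique factorisation ($d(\lambda)=m+n$ implies unique $\lambda=\mu\nu$ with $d(\mu)=m,d(\nu)=n$); vertices are degree-$0$ morphisms; row-finite means each $v\Lambda^n$ is finite and no sources means each $v\Lambda^n$ is nonempty. An automorphism is a bijective degree-preserving functor; an isomorphism of $k$-graphs is a bijective degree-preserving functor. Given an action $\alpha$ of $\mathbb{Z}^l$ on $\Lambda$, $\Lambda\times_\alpha\mathbb{Z}^l$ is the $(k+l)$-graph with morphisms $\Lambda\times\mathbb{N}^l$, degree $(d(\lambda),m)$, $r(\lambda,m)=(r(\lambda),0)$, $s(\lambda,m)=(\alpha_{-m}(s(\lambda)),0)$, $(\mu,m)(\nu,n)=(\mu\alpha_m(\nu),m+n)$. For a $k$-graph $\Xi$ and a cocycle $c:\Xi\to G$ into an abelian group ($c(\mu\nu)=c(\mu)+c(\nu)$),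 the skew product $\Xi\times_c G$ is the $k$-graph with morphisms $\Xi\times G$, $s(\mu,g)=(s(\mu),g)$, $r(\mu,g)=(r(\mu),c(\mu)+g)$, $(\mu,c(\nu)+g)(\nu,g)=(\mu\nu,g)$, $d(\mu,g)=d(\mu)$. $\Delta_l=\{(m,n)\in\mathbb{Z}^l\times\mathbb{Z}^l:m\le n\}$ is the $l$-graph with $r(m,n)=(m,m)$, $s(m,n)=(n,n)$, $d(m,n)=n-m$, $(m,n)(n,p)=(m,p)$. For a $k$-graph $\Lambda$ and $l$-graph $\Gamma$, $\Lambda\times\Gamma$ is the $(k+l)$-graph with coordinatewise range, source, composition and degree. *)

From HB Require Import structures.
From mathcomp Require Import all_boot all_order all_algebra.
Set Implicit Arguments. Unset Strict Implicit. Unset Printing Implicit Defensive.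
Import Order.TTheory GRing.Theory Num.Theory.
Local Open Scope ring_scope.

Definition Nk (k : nat) := {ffun 'I_k -> nat}.
Definition Zk (k : nat) := {ffun 'I_k -> int}.

Definition addN k (x y : Nk k) : Nk k := [ffun i => (x i + y i)%N].
Definition zeroN k : Nk k := [ffun => 0%N].
Definition toZ l (m : Nk l) : Zk l := [ffun i => (m i)%:Z].
Definition nat_cat k l (x : Nk k) (y : Nk l) : Nk (k + l) :=
  [ffun i => match split i with inl a => x a | inr b => y b end].
Definition zle l (m n : Zk l) : bool := [forall i, m i <= n i].

(* Raw data of a k-graph: a countable set of morphisms, range and source
   (vertices are identified with identity morphisms), composition (only
   meaningful on composable pairs) and degree. *)
Record kgraph_data (k : nat) := KGD {
  kmor : countType;
  kr : kmor -> kmor;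
  ks : kmor -> kmor;
  kcomp : kmor -> kmor -> kmor;
  kd : kmor -> Nk k }.

Section KG.
Variable k : nat.
Variable G : kgraph_data k.

Definition composable (mu nu : kmor G) : Prop := ks mu = kr nu.
Definition is_vertex (v : kmor G) : Prop := kd v = zeroN k.

Definition is_kgraph : Prop :=
  (forall v, is_vertex v -> kr v = v /\ ks v = v) /\
  (forall mu, is_vertex (kr mu) /\ is_vertex (ks mu)) /\
  (forall mu : kmor G, kcomp (kr mu) mu = mu /\ kcomp mu (ks mu) = mu) /\
  (forall mu nu, composable mu nu ->
     kr (kcomp mu nu) = kr mu /\ ks (kcomp mu nu) = ks nu) /\
  (forall mu nu la, composable mu nu -> composable nu la ->
     kcomp (kcomp mu nu) la = kcomp mu (kcomp nu la)) /\
  (forall mu nu, composable mu nu -> kd (kcomp mu nu) = addN (kd mu) (kd nu)) /\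
  (forall la m n, kd la = addN m n ->
     exists! p : kmor G * kmor G,
       [/\ composable p.1 p.2, kcomp p.1 p.2 = la, kd p.1 = m & kd p.2 = n]).

Definition row_finite : Prop :=
  forall v n, is_vertex v -> exists s : seq (kmor G),
    forall la, kr la = v -> kd la = n -> la \in s.

Definition no_sources : Prop :=
  forall v n, is_vertex v -> exists la, kr la = v /\ kd la = n.
End KG.

Definition is_kgraph_iso k (G H : kgraph_data k) (f : kmor G -> kmor H) : Prop :=
  [/\ bijective f,
      forall x, kd (f x) = kd x,
      forall x, f (kr x) = kr (f x),
      forall x, f (ks x) = ks (f x) &
      forall mu nu, composable mu nu -> f (kcomp mu nu) = kcomp (f mu) (f nu)].

Definition is_kgraph_aut k (G : kgraph_data k) (f : kmor G -> kmor G) : Prop :=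
  is_kgraph_iso f.

Definition is_action k l (G : kgraph_data k) (alpha : Zk l -> kmor G -> kmor G) : Prop :=
  [/\ forall n, is_kgraph_aut (alpha n),
      forall x, alpha 0 x = x &
      forall m n x, alpha (m + n) x = alpha m (alpha n x)].

Definition crossed k l (G : kgraph_data k) (alpha : Zk l -> kmor G -> kmor G)
  : kgraph_data (k + l) :=
  @KGD (k + l) (kmor G * Nk l)%type
    (fun x => (kr x.1, zeroN l))
    (fun x => (alpha (- toZ x.2) (ks x.1), zeroN l))
    (fun x y => (kcomp x.1 (alpha (toZ x.2) y.1), addN x.2 y.2))
    (fun x => nat_cat (kd x.1) x.2).

Definition skew_prod k l (X : kgraph_data k) (c : kmor X -> Zk l) : kgraph_data k :=
  @KGD k (kmor X * Zk l)%type
    (fun x => (kr x.1, c x.1 + x.2))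
    (fun x => (ks x.1, x.2))
    (fun x y => (kcomp x.1 y.1, y.2))
    (fun x => kd x.1).

Definition delta_mor l := {p : Zk l * Zk l | zle p.1 p.2}.

Lemma zle_refl l (m : Zk l) : zle m m.
Proof. by apply/forallP => i. Qed.

Definition delta_vert l (m : Zk l) : delta_mor l := exist _ (m, m) (zle_refl m).

Definition delta (l : nat) : kgraph_data l :=
  @KGD l (delta_mor l)
    (fun p => delta_vert (val p).1)
    (fun p => delta_vert (val p).2)
    (fun p q => insubd p ((val p).1, (val q).2))
    (fun p => [ffun i => absz ((val p).2 i - (val p).1 i)]).

Definition kprod k l (G : kgraph_data k) (H : kgraph_data l) : kgraph_data (k + l) :=
  @KGD (k + l) (kmor G * kmor H)%type
    (fun x => (kr x.1, kr x.2))
    (fun x => (ks x.1, ks x.2))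
    (fun x y => (kcomp x.1 y.1, kcomp x.2 y.2))
    (fun x => nat_cat (kd x.1) (kd x.2)).

Lemma zle_subN l (m : Nk l) (n : Zk l) : zle (n - toZ m) n.
Proof.
apply/forallP => i; rewrite !ffunE.
by rewrite lerBlDr lerDl.
Qed.

Definition rho k l (G : kgraph_data k) (alpha : Zk l -> kmor G -> kmor G)
  (x : (kmor G * Nk l) * Zk l) : kmor G * delta_mor l :=
  (alpha (x.2 - toZ x.1.2) x.1.1,
   exist _ (x.2 - toZ x.1.2, x.2) (zle_subN x.1.2 x.2)).

From HB Require Import structures.
From mathcomp Require Import all_boot all_order all_algebra.
Set Implicit Arguments.
Unset Strict Implicit.
Unset Printing Implicit Defensive.
Import Order.TTheory GRing.Theory Num.Theory.
Local Open Scope ring_scope.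

(* The inverse of rho reads the degree m off the Delta_l component as n2 - n1 and
   untwists the Lambda component by alpha_{-n1}.  That rho is a functor comes down
   to alpha being an action by automorphisms: the crossed-product composition
   inserts alpha_m, which is exactly the shift between the twists alpha_{n-m}
   applied to the two factors. *)

Lemma toZ0 l : toZ (zeroN l) = 0.
Proof. by apply/ffunP => i; rewrite !ffunE. Qed.

Lemma toZD l (m p : Nk l) : toZ (addN m p) = toZ m + toZ p.
Proof. by apply/ffunP => i; rewrite !ffunE. Qed.

Lemma toZ_delta_deg l (p : delta_mor l) :
  toZ (kd (p : kmor (delta l))) = (val p).2 - (val p).1.
Proof.
case: p => [[a b] /= /forallP hab]; apply/ffunP => i.
by rewrite !ffunE gez0_abs // subr_ge0; apply: hab.
Qed.

Lemma delta_deg_subN l (m : Nk l) (n : Zk l) :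
  kd (exist _ (n - toZ m, n) (zle_subN m n) : kmor (delta l)) = m.
Proof. by apply/ffunP => i; rewrite !ffunE subKr. Qed.

Section Action.
Variables (k l : nat) (G : kgraph_data k) (alpha : Zk l -> kmor G -> kmor G).
Hypothesis alpha_act : is_action alpha.

Lemma actD a b x : alpha a (alpha b x) = alpha (a + b) x.
Proof. by case: alpha_act => _ _ ->. Qed.

Lemma act0 x : alpha 0 x = x.
Proof. by case: alpha_act => _ ->. Qed.

Lemma actNK a x : alpha (- a) (alpha a x) = x.
Proof. by rewrite actD addNr act0. Qed.

Lemma actKN a x : alpha a (alpha (- a) x) = x.
Proof. by rewrite actD addrN act0. Qed.

Lemma act_kd a x : kd (alpha a x) = kd x.
Proof. by case: alpha_act => /(_ a) [_ ->]. Qed.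

Lemma act_kr a x : alpha a (kr x) = kr (alpha a x).
Proof. by case: alpha_act => /(_ a) [_ _ ->]. Qed.

Lemma act_ks a x : alpha a (ks x) = ks (alpha a x).
Proof. by case: alpha_act => /(_ a) [_ _ _ ->]. Qed.

Lemma act_kcomp a mu nu :
  composable mu nu -> alpha a (kcomp mu nu) = kcomp (alpha a mu) (alpha a nu).
Proof. by move=> hc; case: alpha_act => /(_ a) [_ _ _ _ ->]. Qed.

Definition neg_deg_cocycle (x : kmor (crossed alpha)) : Zk l := - toZ x.2.

Notation skew := (@skew_prod _ _ (crossed alpha) neg_deg_cocycle).
Notation target := (kprod G (delta l)).

Definition rho_inv (y : kmor G * delta_mor l) : (kmor G * Nk l) * Zk l :=
  ((alpha (- (val y.2).1) y.1, kd (y.2 : kmor (delta l))), (val y.2).2).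

Lemma rhoK : cancel (rho alpha) rho_inv.
Proof. by move=> [[la m] n]; rewrite /rho_inv delta_deg_subN /= actNK. Qed.

Lemma rho_invK : cancel rho_inv (rho alpha).
Proof.
move=> [mu p]; have e := toZ_delta_deg p.
rewrite /rho /rho_inv /=; congr (_, _); last apply: val_inj.
all: rewrite /= e subKr.
- by rewrite actKN.
- by rewrite -surjective_pairing.
Qed.

Lemma rho_kd (x : kmor skew) : kd (rho alpha x : kmor target) = kd x.
Proof.
by case: x => [[la m] n]; congr nat_cat; [exact: act_kd | exact: delta_deg_subN].
Qed.

Lemma rho_kr (x : kmor skew) : rho alpha (kr x) = kr (rho alpha x : kmor target).
Proof.
case: x => [[la m] n]; congr (_, _); last apply: val_inj.
all: by rewrite /= toZ0 subr0 /neg_deg_cocycle /= addrC ?act_kr.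
Qed.

Lemma rho_ks (x : kmor skew) : rho alpha (ks x) = ks (rho alpha x : kmor target).
Proof.
case: x => [[la m] n]; congr (_, _); last apply: val_inj.
all: by rewrite /= toZ0 subr0 ?actD -?act_ks.
Qed.

Lemma rho_kcomp (x y : kmor skew) : composable x y ->
  rho alpha (kcomp x y) = kcomp (rho alpha x : kmor target) (rho alpha y).
Proof.
case: x y => [[la m] n] [[mu p] q]; rewrite /composable /rho /=.
case=> e_src ->.
have hc : composable la (alpha (toZ m) mu).
  by rewrite /composable -act_kr -e_src actKN.
have e_twist_la : - toZ p + q - toZ m = q - toZ (addN m p).
  by rewrite toZD opprD addrA addrAC (addrC (- toZ p)).
have e_twist_mu : q - toZ (addN m p) + toZ m = q - toZ p.
  by rewrite toZD opprD addrA addrAC addrNK.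
congr (_, _); first by rewrite act_kcomp // actD e_twist_mu /neg_deg_cocycle /= e_twist_la.
apply: val_inj; rewrite /= /insubd insubT /neg_deg_cocycle /= e_twist_la //.
exact: zle_subN.
Qed.

Lemma rho_is_iso : is_kgraph_iso (rho alpha : kmor skew -> kmor target).
Proof.
split; [exact: Bijective rhoK rho_invK | exact: rho_kd | exact: rho_kr
       | exact: rho_ks | exact: rho_kcomp].
Qed.

End Action.

Theorem theorem3p8 (k l : nat) (G : kgraph_data k)
  (alpha : Zk l -> kmor G -> kmor G) :
  is_kgraph G -> row_finite G -> no_sources G -> (0 < l)%N ->
  is_action alpha ->
  @is_kgraph_iso (k + l)
    (@skew_prod (k + l) l (crossed alpha) (fun x : kmor (crossed alpha) => - toZ x.2))
    (kprod G (delta l))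
    (rho alpha).
Proof. by move=> _ _ _ _; exact: rho_is_iso. Qed.
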